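(* Let $r\ge 2$ and $m\ge 7$ be integers. Then for every integer $n\ge m-1$, $$F_{n+2^{m-6},r}\equiv F_{n,r}\pmod{2^m},$$ i.e. from the term of index $m-1$ onward the sequence $(F_{n,r}\bmod 2^m)_{n\ge0}$ is periodic with period $2^{m-6}$.
   Context: For positive integers $r\le m\le n$, $S_r(n,m)$ denotes the $r$-Stirling number of the second kind: the number of partitions of $\{1,\dots,n\}$ into $m$ non-empty blocks such that $1,\dots,r$ lie in pairwise distinct blocks. For a positive integer $r$ and integer $n\ge 0$, the $r$-Fubini number is $F_{n,r}=\sum_{k=0}^{n}(k+r)!\,S_r(n+r,k+r)$. *)

From mathcomp Require Import all_boot.
Set Implicit Arguments. Unset Strict Implicit. Unset Printing Implicit Defensive.

(* r-Stirling number of the second kind S_r(n,m): number of partitions of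
   {1,..,n} (here modelled as 'I_n = {0,..,n-1}, elements 1..r become 0..r-1)
   into m non-empty blocks such that the first r elements lie in pairwise
   distinct blocks. *)
Definition rstirling2 (r n m : nat) : nat :=
  #|[set P : {set {set 'I_n}} |
      [&& partition P [set: 'I_n], #|P| == m &
       [forall i : 'I_n, forall j : 'I_n,
          [&& (i < r)%N, (j < r)%N & i != j] ==> (pblock P i != pblock P j)]]]|.

Definition rfubini (n r : nat) : nat :=
  \sum_(0 <= k < n.+1) (k + r)`! * rstirling2 r (n + r) (k + r).

(* Deleting the largest element from a partition gives the recurrence
   S_r(N+1,M+1) = (M+1) S_r(N,M+1) + S_r(N,M), whence k! S_r(n+r,k+r) is the
   k-th forward difference of x^n at x = r and
   F_{n,r} = r! U_r(r) with U_r(x) = sum_k C(k+r,r) Delta^k x^n.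
   Since C(k+r+1,r+1) = C(k+r,r+1) + C(k+r,r), these sums satisfy
   U_{r+1}(x+1) = 2 U_{r+1}(x) - U_r(x), with x^n playing the role of U_{-1}.
   Modulo 2^N the same recurrence holds for the explicit sums
   (-1)^(r+1) sum_{j<N} C(j+r,r) 2^j (x-r-1-j)^n, and a function with
   w(x+1) = 2 w(x) mod 2^N vanishes mod 2^N.  Hence, mod 2^m,
   F_{n,r} = (-1)^(r+1) r! sum_{j<m} C(j+r,r) 2^j (-1-j)^n, and every term is
   2^(m-6)-periodic in n >= m-1: for odd j it is divisible by 2^(j+n), and for
   even j >= 2 we have (j+1)^(2^(m-6)) = 1 mod 2^(m-4) while 16 divides
   r! C(j+r,r) 2^j. *)

From mathcomp Require Import all_boot all_algebra.
From mathcomp Require Import ring zify.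
Set Implicit Arguments. Unset Strict Implicit. Unset Printing Implicit Defensive.

Section PartitionSurgery.
Variable T : finType.
Implicit Types (P Q : {set {set T}}) (A B C D : {set T}) (x : T).

Lemma setD1_notin x A : x \notin A -> A :\ x = A.
Proof. by move=> xA; apply/setDidPl; rewrite disjoint_sym disjoints1. Qed.

Lemma partition_pblock_mem P D i : partition P D -> i \in D -> pblock P i \in P.
Proof. by move=> pP iD; apply: pblock_mem; rewrite (cover_partition pP). Qed.

Lemma partition_mem_pblock P D i : partition P D -> i \in D -> i \in pblock P i.
Proof. by move=> pP iD; rewrite mem_pblock (cover_partition pP). Qed.

Lemma partition_pblock_eq P1 P2 D : partition P1 D -> partition P2 D ->
  {in D, pblock P1 =1 pblock P2} -> P1 = P2.
Proof.
suff blocksE P : partition P D -> P = [set pblock P i | i in D].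
  by move=> p1 p2 E; rewrite (blocksE _ p1) (blocksE _ p2); apply: eq_in_imset.
move=> pP; apply/setP=> C; apply/idP/imsetP => [CP|[i iD ->]].
  have /set0Pn[i iC] := partition_neq0 pP CP.
  exists i; first exact: subsetP (partitionS pP CP) _ iC.
  by rewrite (def_pblock (partition_trivIset pP) CP iC).
exact: partition_pblock_mem pP iD.
Qed.

Definition part_del x P := [set C :\ x | C in P] :\ set0.
Definition part_new x Q := [set x] |: Q.
Definition part_join x Q B := (x |: B) |: (Q :\ B).

Section Deletion.
Variables (D : {set T}) (x : T).
Hypothesis xD : x \notin D.

Lemma mem_neq i : i \in D -> i != x.
Proof. by move=> iD; apply: contraNneq xD => <-. Qed.

Lemma part_del_partition P : partition P (x |: D) -> partition (part_del x P) D.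
Proof.
move=> pP; apply/and3P; split.
- apply/eqP/setP=> i; apply/bigcupP/idP.
    case=> _ /setD1P[_ /imsetP[C CP ->]] /setD1P[ix iC].
    by have := subsetP (partitionS pP CP) _ iC; rewrite !inE (negbTE ix).
  move=> iD; exists (pblock P i :\ x); last first.
    by rewrite !inE (partition_mem_pblock pP (setU1r x iD)) mem_neq.
  rewrite !inE (imset_f _ (partition_pblock_mem pP (setU1r x iD))) andbT.
  apply/set0Pn; exists i.
  by rewrite !inE (partition_mem_pblock pP (setU1r x iD)) mem_neq.
- apply/trivIsetP=> _ _ /setD1P[_ /imsetP[C1 C1P ->]] /setD1P[_ /imsetP[C2 C2P ->]] ne.
  have ne12 : C1 != C2 by apply: contraNneq ne => ->.
  apply: disjointW (trivIsetP (partition_trivIset pP) _ _ C1P C2P ne12);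
    exact: subD1set.
- by rewrite !inE eqxx.
Qed.

Lemma pblock_part_del P i : partition P (x |: D) -> i \in D ->
  pblock (part_del x P) i = pblock P i :\ x.
Proof.
move=> pP iD; have iP := partition_mem_pblock pP (setU1r x iD).
apply: def_pblock; first exact: partition_trivIset (part_del_partition pP).
  rewrite !inE (imset_f _ (partition_pblock_mem pP (setU1r x iD))) andbT.
  by apply/set0Pn; exists i; rewrite !inE iP mem_neq.
by rewrite !inE iP mem_neq.
Qed.

Lemma pblock_part_del_eq P i j : partition P (x |: D) -> i \in D -> j \in D ->
  (pblock (part_del x P) i == pblock (part_del x P) j) = (pblock P i == pblock P j).
Proof.
move=> pP iD jD; rewrite !(pblock_part_del pP) //.
apply/eqP/eqP=> [E|->] //.
have : i \in pblock P j :\ x.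
  by rewrite -E !inE mem_neq // (partition_mem_pblock pP (setU1r x iD)).
by case/setD1P=> _ /(same_pblock (partition_trivIset pP)).
Qed.

Lemma part_del_inj P1 P2 : partition P1 (x |: D) -> partition P2 (x |: D) ->
  part_del x P1 = part_del x P2 -> pblock P1 x = pblock P2 x -> P1 = P2.
Proof.
move=> p1 p2 Edel Ex; apply: (partition_pblock_eq p1 p2) => i /setU1P[->|iD] //.
have t1 := partition_trivIset p1; have t2 := partition_trivIset p2.
have iP2 := partition_mem_pblock p2 (setU1r x iD).
have [xi1|xi1] := boolP (x \in pblock P1 i).
  rewrite -(same_pblock t1 xi1) Ex; apply/esym/(same_pblock t2).
  by rewrite -Ex (same_pblock t1 xi1) (partition_mem_pblock p1 (setU1r x iD)).
have xi2 : x \notin pblock P2 i.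
  apply: contra xi1 => xi2; rewrite -(same_pblock t2 xi2) -Ex in iP2.
  by rewrite (same_pblock t1 iP2) (partition_mem_pblock p1 (setU11 x D)).
have := pblock_part_del p1 iD; rewrite Edel (pblock_part_del p2 iD).
by rewrite !setD1_notin.
Qed.

End Deletion.

Section Insertion.
Variables (Q : {set {set T}}) (D : {set T}) (x : T).
Hypotheses (xD : x \notin D) (pQ : partition Q D).

Lemma notin_block C : C \in Q -> x \notin C.
Proof. by move=> CQ; apply: contra xD; apply/subsetP/(partitionS pQ CQ). Qed.

Lemma part_new_partition : partition (part_new x Q) (x |: D).
Proof.
apply: partitionU1 => //; first by apply/set0Pn; exists x; rewrite inE.
by rewrite disjoints1.
Qed.

Lemma card_part_new : #|part_new x Q| = #|Q|.+1.
Proof.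
rewrite cardsU1; suff -> : [set x] \notin Q by [].
by apply/negP => /notin_block; rewrite set11.
Qed.

Lemma pblock_part_new : pblock (part_new x Q) x = [set x].
Proof.
apply: def_pblock; rewrite ?setU11 ?set11 //.
exact: partition_trivIset part_new_partition.
Qed.

Lemma part_del_new : part_del x (part_new x Q) = Q.
Proof.
apply/setP=> C; apply/setD1P/idP => [[nC /imsetP[C' /setU1P[->|C'Q] E]]|CQ].
- by move: nC; rewrite E setDv eqxx.
- by rewrite E setD1_notin // notin_block.
- split; first exact: partition_neq0 pQ CQ.
  by apply/imsetP; exists C; rewrite ?setU1r // setD1_notin // notin_block.
Qed.

Variable B : {set T}.
Hypothesis BQ : B \in Q.

Lemma part_join_partition : partition (part_join x Q B) (x |: D).
Proof.
have -> : x |: D = (x |: B) :|: (D :\: B).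
  by rewrite -setUA -{1}(setID D B) (setIidPr (partitionS pQ BQ)).
apply: partitionU1; first exact: partitionD1.
  by apply/set0Pn; exists x; rewrite setU11.
rewrite -setI_eq0; apply/eqP/setP=> y; rewrite !inE.
case: eqP => [->|_] /=; first by rewrite (negbTE xD) andbF.
by case: (y \in B).
Qed.

Lemma card_part_join : #|part_join x Q B| = #|Q|.
Proof.
have xBQ : x |: B \notin Q :\ B.
  by apply/negP=> /setD1P[_ /notin_block]; rewrite setU11.
by rewrite cardsU1 xBQ [#|Q|](cardsD1 B) BQ.
Qed.

Lemma pblock_part_join : pblock (part_join x Q B) x = x |: B.
Proof.
apply: def_pblock; rewrite ?setU11 //.
exact: partition_trivIset part_join_partition.
Qed.

Lemma part_del_join : part_del x (part_join x Q B) = Q.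
Proof.
apply/setP=> C; apply/setD1P/idP => [[nC /imsetP[C' /setU1P[->|/setD1P[_ C'Q]] ->]]|CQ].
- by rewrite setU1K // notin_block.
- by rewrite setD1_notin // notin_block.
- split; first exact: partition_neq0 pQ CQ.
  have [->|CB] := eqVneq C B.
    by apply/imsetP; exists (x |: B); rewrite ?setU11 // setU1K // notin_block.
  by apply/imsetP; exists C; rewrite ?setD1_notin ?notin_block // !inE CB CQ orbT.
Qed.

Lemma set1_notin_part_join : [set x] \notin part_join x Q B.
Proof.
apply/negP => /setU1P[xBE|/setD1P[_ /notin_block]]; last by rewrite set11.
have /set0Pn[y yB] := partition_neq0 pQ BQ.
have /set1P yx : y \in [set x] by rewrite xBE setU1r.
by have := notin_block BQ; rewrite -yx yB.
Qed.

End Insertion.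

Lemma part_join_inj Q1 Q2 B1 B2 D x : x \notin D ->
    partition Q1 D -> partition Q2 D -> B1 \in Q1 -> B2 \in Q2 ->
  part_join x Q1 B1 = part_join x Q2 B2 -> (Q1, B1) = (Q2, B2).
Proof.
move=> xD pQ1 pQ2 BQ1 BQ2 E.
have EQ : Q1 = Q2 by rewrite -(part_del_join xD pQ1 BQ1) E (part_del_join xD pQ2 BQ2).
have EB : x |: B1 = x |: B2.
  by rewrite -(pblock_part_join xD pQ1 BQ1) E (pblock_part_join xD pQ2 BQ2).
by rewrite EQ -(setU1K (notin_block xD pQ1 BQ1)) EB (setU1K (notin_block xD pQ2 BQ2)).
Qed.

Section Decomposition.
Variables (P : {set {set T}}) (D : {set T}) (x : T).
Hypotheses (xD : x \notin D) (pP : partition P (x |: D)).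

Lemma part_new_del : [set x] \in P -> P = part_new x (part_del x P).
Proof.
move=> xP; have pQ := part_del_partition xD pP.
apply: (part_del_inj xD pP (part_new_partition xD pQ)).
  by rewrite (part_del_new xD pQ).
rewrite (pblock_part_new xD pQ); apply: def_pblock xP (set11 x).
exact: partition_trivIset pP.
Qed.

Lemma pblock_del_mem : [set x] \notin P -> pblock P x :\ x \in part_del x P.
Proof.
move=> xP; have xPx := partition_mem_pblock pP (setU11 x D).
rewrite !inE (imset_f _ (partition_pblock_mem pP (setU11 x D))) andbT.
apply: contra xP => /eqP Bx0; suff <- : pblock P x = [set x].
  exact: partition_pblock_mem pP (setU11 x D).
by rewrite -(setD1K xPx) Bx0 setU0.
Qed.

Lemma part_join_del : [set x] \notin P ->
  P = part_join x (part_del x P) (pblock P x :\ x).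
Proof.
move=> xP; have pQ := part_del_partition xD pP; have BQ := pblock_del_mem xP.
apply: (part_del_inj xD pP (part_join_partition xD pQ BQ)).
  by rewrite (part_del_join xD pQ BQ).
by rewrite (pblock_part_join xD pQ BQ) setD1K // (partition_mem_pblock pP (setU11 x D)).
Qed.

End Decomposition.

End PartitionSurgery.

Lemma card_pointed_sets (T : finType) (F : {set {set T}}) m :
    {in F, forall A : {set T}, #|A| = m} ->
  #|[set u : {set T} * T | (u.1 \in F) && (u.2 \in u.1)]| = m * #|F|.
Proof.
move=> cardF; rewrite -sum1_card.
rewrite (eq_bigl (fun u => (u.1 \in F) && (u.2 \in u.1))) => [|u]; last by rewrite inE.
rewrite -(pair_big_dep (mem F) (fun A y => y \in A) (fun _ _ => 1)) /=.
rewrite mulnC -sum_nat_const; apply: eq_bigr => A /cardF <-.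
by rewrite sum1_card.
Qed.

Section SeparatingPartitions.
Variable T : finType.
Implicit Types (P Q : {set {set T}}) (B D R : {set T}) (x : T).

Definition separated R P :=
  [forall i in R, forall j in R, (i != j) ==> (pblock P i != pblock P j)].

Definition rparts R D m := [set P | [&& partition P D, #|P| == m & separated R P]].

Lemma rparts_partition R D m P : P \in rparts R D m -> partition P D.
Proof. by rewrite inE => /and3P[]. Qed.

Lemma separatedP R P : reflect {in R &, injective (pblock P)} (separated R P).
Proof.
apply: (iffP forall_inP) => [sep i j iR jR|inj i iR].
  by apply: contra_eq => ij; have /forall_inP/(_ j jR)/implyP := sep i iR; apply.
by apply/forall_inP=> j jR; apply/implyP; apply: contraNneq => /inj->.
Qed.

Lemma separated_part_del R D P x : x \notin D -> R \subset D ->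
  partition P (x |: D) -> separated R (part_del x P) = separated R P.
Proof.
move=> xD RD pP; apply/forall_inP/forall_inP=> sep i iR; apply/forall_inP=> j jR;
  have /forall_inP/(_ j jR) := sep i iR;
  by rewrite (pblock_part_del_eq xD pP (subsetP RD _ iR) (subsetP RD _ jR)).
Qed.

Section Recurrence.
Variables (R D : {set T}) (x : T).
Hypotheses (xD : x \notin D) (RD : R \subset D).

Lemma rparts_part_new Q m : partition Q D ->
  (part_new x Q \in rparts R (x |: D) m.+1) = (Q \in rparts R D m).
Proof.
move=> pQ; have pP := part_new_partition xD pQ.
rewrite !inE pP pQ (card_part_new xD pQ) eqSS.
by rewrite -(separated_part_del xD RD pP) (part_del_new xD pQ).
Qed.

Lemma rparts_part_join Q B m : partition Q D -> B \in Q ->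
  (part_join x Q B \in rparts R (x |: D) m) = (Q \in rparts R D m).
Proof.
move=> pQ BQ; have pP := part_join_partition xD pQ BQ.
rewrite !inE pP pQ (card_part_join xD pQ BQ).
by rewrite -(separated_part_del xD RD pP) (part_del_join xD pQ BQ).
Qed.

Lemma card_rparts_new m :
  #|[set P in rparts R (x |: D) m.+1 | [set x] \in P]| = #|rparts R D m|.
Proof.
rewrite -(@card_in_imset _ _ (part_new x) (rparts R D m)); last first.
  move=> Q1 Q2; rewrite !inE => /and3P[pQ1 _ _] /and3P[pQ2 _ _] E.
  by rewrite -(part_del_new xD pQ1) E (part_del_new xD pQ2).
apply: eq_card => P; apply/idP/imsetP => [|[Q RQ ->]].
  rewrite inE => /andP[RP xP]; have pP := rparts_partition RP.
  have pQ := part_del_partition xD pP.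
  exists (part_del x P); last exact: part_new_del xD pP xP.
  by rewrite -(rparts_part_new _ pQ) -(part_new_del xD pP xP).
have pQ := rparts_partition RQ.
by rewrite inE rparts_part_new // RQ setU11.
Qed.

Lemma card_rparts_join m :
  #|[set P in rparts R (x |: D) m | [set x] \notin P]| = m * #|rparts R D m|.
Proof.
pose S := [set u : {set {set T}} * {set T} | (u.1 \in rparts R D m) && (u.2 \in u.1)].
have cardS : #|S| = m * #|rparts R D m|.
  by apply: card_pointed_sets => Q; rewrite inE => /and3P[_ /eqP].
rewrite -cardS -(@card_in_imset _ _ (fun u => part_join x u.1 u.2) S); last first.
  move=> [Q1 B1] [Q2 B2]; rewrite !inE /=.
  move=> /andP[/and3P[pQ1 _ _] BQ1] /andP[/and3P[pQ2 _ _] BQ2].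
  exact: part_join_inj xD pQ1 pQ2 BQ1 BQ2.
apply: eq_card => P; apply/idP/imsetP => [|[[Q B]]].
  rewrite inE => /andP[RP xP]; have pP := rparts_partition RP.
  have pQ := part_del_partition xD pP; have BQ := pblock_del_mem pP xP.
  exists (part_del x P, pblock P x :\ x); last exact: part_join_del xD pP xP.
  by rewrite inE /= BQ andbT -(rparts_part_join _ pQ BQ) -(part_join_del xD pP xP).
move=> QBS ->; rewrite inE in QBS; case/andP: QBS => /= RQ BQ.
have pQ := rparts_partition RQ.
by rewrite inE rparts_part_join // RQ (set1_notin_part_join xD pQ BQ).
Qed.

Lemma card_rparts_setU1 m :
  #|rparts R (x |: D) m.+1| = m.+1 * #|rparts R D m.+1| + #|rparts R D m|.
Proof.
rewrite -(card_rparts_new m) -(card_rparts_join m.+1) addnC.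
rewrite -(cardsID [set P : {set {set T}} | [set x] \in P] (rparts R (x |: D) m.+1)).
by congr (_ + _); apply: eq_card => P; rewrite !inE andbC.
Qed.

End Recurrence.

Lemma rparts_le_card R D m P : R \subset D -> P \in rparts R D m -> #|R| <= m.
Proof.
move=> RD; rewrite inE => /and3P[pP /eqP <- /separatedP inj].
rewrite -(card_in_imset inj); apply/subset_leq_card/subsetP => _ /imsetP[i iR ->].
exact: partition_pblock_mem pP (subsetP RD _ iR).
Qed.

Lemma card_rparts_lt R D m : R \subset D -> m < #|R| -> #|rparts R D m| = 0.
Proof.
move=> RD ltmR; apply/eqP; rewrite cards_eq0; apply/eqP/setP=> P.
by rewrite in_set0; apply/negP=> /(rparts_le_card RD); rewrite leqNgt ltmR.
Qed.

Definition discrete_part R := [set [set i] | i in R].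

Lemma discrete_partition R : partition (discrete_part R) R.
Proof.
apply/and3P; split.
- apply/eqP/setP=> i; apply/bigcupP/idP => [[_ /imsetP[j jR ->]]|iR].
    by rewrite inE => /eqP->.
  by exists [set i]; rewrite ?set11 ?imset_f.
- apply/trivIsetP=> _ _ /imsetP[i iR ->] /imsetP[j jR ->] ne.
  by rewrite disjoints1 inE; apply: contraNneq ne => ->.
- by apply/imsetP=> -[i _ /eqP]; rewrite eq_sym -cards_eq0 cards1.
Qed.

Lemma pblock_discrete_part R i : i \in R -> pblock (discrete_part R) i = [set i].
Proof.
move=> iR; apply: def_pblock; rewrite ?set11 ?imset_f //.
exact: partition_trivIset (discrete_partition R).
Qed.

Lemma card_discrete_part R : #|discrete_part R| = #|R|.
Proof. by apply: card_in_imset => i j _ _; apply: set1_inj. Qed.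

Lemma rparts_diag R m P : P \in rparts R R m -> P = discrete_part R.
Proof.
rewrite inE => /and3P[pP _ /separatedP inj].
apply: (partition_pblock_eq pP (discrete_partition R)) => i iR.
rewrite pblock_discrete_part //; apply/setP=> j; rewrite inE.
apply/idP/eqP=> [jP|->]; last exact: partition_mem_pblock pP iR.
have jR : j \in R := subsetP (partitionS pP (partition_pblock_mem pP iR)) _ jP.
by apply: inj => //; apply: same_pblock (partition_trivIset pP) jP.
Qed.

Lemma card_rparts_diag R m : #|rparts R R m| = (m == #|R|).
Proof.
have [->|ne] := eqVneq m #|R|.
  apply/eqP/cards1P; exists (discrete_part R); apply/setP=> P.
  rewrite inE; apply/idP/eqP=> [/rparts_diag //|->].
  rewrite !inE discrete_partition card_discrete_part eqxx /=.
  by apply/separatedP => i j iR jR; rewrite !pblock_discrete_part //; apply: set1_inj.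
apply/eqP; rewrite cards_eq0; apply/eqP/setP=> P; rewrite in_set0.
apply/negP=> RP; move: (RP); rewrite (rparts_diag RP) inE card_discrete_part.
by case/and3P=> _ /eqP Em _; rewrite Em eqxx in ne.
Qed.

End SeparatingPartitions.

Section SeparatingPartitionsImage.
Variables (T T' : finType) (f : T -> T').
Hypothesis f_inj : injective f.
Implicit Types (P : {set {set T}}) (D R : {set T}).

Definition part_map P : {set {set T'}} := [set f @: (B : {set T}) | B in P].

Lemma pblock_part_map P D i : partition P D -> i \in D ->
  pblock (part_map P) (f i) = f @: pblock P i.
Proof.
move=> pP iD; apply: def_pblock.
- by rewrite imset_trivIset // (partition_trivIset pP).
- exact/imset_f/(partition_pblock_mem pP).
- exact/imset_f/(partition_mem_pblock pP).
Qed.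

Lemma part_map_rparts R D m P : R \subset D ->
  (part_map P \in rparts (f @: R) (f @: D) m) = (P \in rparts R D m).
Proof.
move=> RD; rewrite !inE imset_partition //.
have [pP|] //= := boolP (partition P D).
rewrite card_in_imset; last by move=> A B _ _; apply: imset_inj.
congr (_ && _); apply/separatedP/separatedP => inj.
  move=> i j iR jR E; apply/f_inj/inj; rewrite ?imset_f //.
  by rewrite !(pblock_part_map pP) ?(subsetP RD) // E.
move=> _ _ /imsetP[i iR ->] /imsetP[j jR ->].
by rewrite !(pblock_part_map pP) ?(subsetP RD) // => /(imset_inj f_inj)/inj ->.
Qed.

Lemma part_map_preimage (P' : {set {set T'}}) D : partition P' (f @: D) ->
  part_map [set f @^-1: (B : {set T'}) | B in P'] = P'.
Proof.
move=> pP'; rewrite /part_map -imset_comp; apply: etrans (imset_id _).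
apply: eq_in_imset => B BP /=; apply/setP=> y; apply/imsetP/idP => [[z]|yB].
  by rewrite inE => zB ->.
have /imsetP[z _ yE] := subsetP (partitionS pP' BP) _ yB.
by exists z; rewrite // inE -yE.
Qed.

Lemma card_rparts_imset R D m : R \subset D ->
  #|rparts R D m| = #|rparts (f @: R) (f @: D) m|.
Proof.
move=> RD; rewrite -(@card_in_imset _ _ part_map (rparts R D m)); last first.
  by move=> A B _ _; apply/imset_inj/imset_inj.
apply: eq_card => P'; apply/imsetP/idP => [[P RP ->]|RP'].
  by rewrite part_map_rparts.
have pP' := rparts_partition RP'.
exists [set f @^-1: (B : {set T'}) | B in P']; last by rewrite (part_map_preimage pP').
by rewrite -(part_map_rparts _ _ RD) (part_map_preimage pP').
Qed.

End SeparatingPartitionsImage.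

Definition ord_prefix r n : {set 'I_n} := [set i : 'I_n | i < r].

Lemma rstirling2E r n m : rstirling2 r n m = #|rparts (ord_prefix r n) setT m|.
Proof.
apply: eq_card => P; rewrite !inE; do 2!congr (_ && _).
apply/forallP/separatedP => [sep i j|inj i].
  rewrite !inE => ir jr; apply: contra_eq => ij.
  by have /forallP/(_ j)/implyP := sep i; apply; rewrite ir jr.
apply/forallP=> j; apply/implyP=> /and3P[ir jr]; apply: contraNneq => /inj.
by rewrite !inE => ->.
Qed.

Lemma card_ord_prefix r n : r <= n -> #|ord_prefix r n| = r.
Proof.
move=> rn; have w_inj : injective (widen_ord rn).
  by move=> i j E; apply: val_inj; apply: (congr1 val E).
rewrite -[r in RHS]card_ord -(card_imset _ w_inj).
apply: eq_card => i; rewrite inE.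
apply/idP/imsetP => [ir|[j _ ->]]; last by rewrite /= ltn_ord.
by exists (Ordinal ir) => //; apply: val_inj.
Qed.

Lemma rstirling2_diag r m : rstirling2 r r m = (m == r).
Proof.
rewrite rstirling2E.
have -> : [set: 'I_r] = ord_prefix r r by apply/setP=> i; rewrite !inE ltn_ord.
by rewrite card_rparts_diag card_ord_prefix.
Qed.

Lemma rstirling2_lt r n m : r <= n -> m < r -> rstirling2 r n m = 0.
Proof.
by move=> rn mr; rewrite rstirling2E card_rparts_lt ?subsetT ?card_ord_prefix.
Qed.

Lemma rstirling2S r n m : r <= n ->
  rstirling2 r n.+1 m.+1 = m.+1 * rstirling2 r n m.+1 + rstirling2 r n m.
Proof.
move=> rn; pose f := @widen_ord n n.+1 (leqnSn n).
have f_inj : injective f by move=> i j E; apply: val_inj; apply: (congr1 val E).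
have fR : f @: ord_prefix r n = ord_prefix r n.+1.
  apply/setP=> i; rewrite inE; apply/imsetP/idP => [[j]|ir].
    by rewrite inE => jr ->.
  by exists (Ordinal (leq_trans ir rn)); rewrite ?inE //; apply: val_inj.
have maxD : ord_max \notin f @: [set: 'I_n].
  by apply/imsetP=> -[j _ /(congr1 val)] /= jE; move: (ltn_ord j); rewrite -jE ltnn.
have maxU : ord_max |: f @: [set: 'I_n] = [set: 'I_n.+1].
  apply/setP=> i; rewrite !inE; have [//|ne] := eqVneq i ord_max.
  have iN : i < n.
    rewrite -ltnS ltn_neqAle ltn_ord andbT eqSS.
    by apply: contraNneq ne => iE; apply/eqP/val_inj.
  by apply/imsetP; exists (Ordinal iN) => //; apply: val_inj.
rewrite !rstirling2E !(card_rparts_imset f_inj _ (subsetT (ord_prefix r n))) fR.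
rewrite -maxU card_rparts_setU1 //.
by rewrite -fR; apply: imsetS; apply: subsetT.
Qed.

Lemma odd_expn_pow2_sub1 a s : odd a -> 0 < s -> 2 ^ s.+2 %| a ^ (2 ^ s) - 1.
Proof.
move=> odd_a; elim: s => [//|s IHs] _.
rewrite [2 ^ s.+1]expnS [2 * _]mulnC expnM -(exp1n 2) subn_sqr exp1n.
case: s IHs => [_|s IHs].
  rewrite expn1 -(odd_double_half a) odd_a add1n.
  have -> : (a./2.*2.+1 - 1) * (a./2.*2.+1 + 1) = 4 * (a./2 * a./2.+1).
    by rewrite subn1 addn1 -!muln2 /=; ring.
  rewrite (_ : 2 ^ 3 = 4 * 2) // dvdn_pmul2l // dvdn2 oddM /=.
  by case: odd.
by rewrite expnSr dvdn_mul ?IHs // dvdn2 addn1 /= oddX odd_a orbT.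
Qed.

Lemma dvdn_fact_bin_pow2 r j : 2 <= r -> 2 <= j ->
  2 ^ 4 %| r`! * 'C(j + r, r) * 2 ^ j.
Proof.
move=> r_ge2 j_ge2; have [j_ge4|] := leqP 4 j; first by rewrite dvdn_mull // dvdn_exp2l.
case: j j_ge2 => [|[|[|[|j]]]] // _ _.
  case: r r_ge2 => [|[|[|[|r]]]] // _.
  by rewrite (_ : 2 ^ 4 = 4 * 2 ^ 2) // dvdn_mul // dvdn_mulr // dvdn_fact.
by rewrite (_ : 2 ^ 4 = 2 * 2 ^ 3) // dvdn_mul // dvdn_mulr // dvdn_fact.
Qed.

Import GRing.Theory.
Local Open Scope ring_scope.

Section ForwardDifferences.
Variable R : comPzRingType.
Implicit Types (a b : nat -> R) (x : R).

Fixpoint fdiff (n k : nat) x : R :=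
  if k is k'.+1 then fdiff n k' (x + 1) - fdiff n k' x else x ^+ n.

Lemma fdiffS n k x : fdiff n k.+1 x = fdiff n k (x + 1) - fdiff n k x.
Proof. by []. Qed.

Lemma fdiff_addr1 n k x : fdiff n k (x + 1) = fdiff n k.+1 x + fdiff n k x.
Proof. by rewrite fdiffS subrK. Qed.

Lemma fdiff_exprS n k x :
  fdiff n.+1 k.+1 x = x * fdiff n k.+1 x + k.+1%:R * fdiff n k (x + 1).
Proof.
elim: k x => [|k IHk] x; first by rewrite /= !exprS; ring.
by rewrite fdiffS !IHk !fdiffS -!natr1; ring.
Qed.

Lemma fdiff_gt n k x : (n < k)%N -> fdiff n k x = 0.
Proof.
elim: n k x => [|n IHn] [|k] x //.
  move=> _; elim: k x => [|k IHk] x; last by rewrite fdiffS !IHk subrr.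
  by rewrite fdiffS /= !expr0 subrr.
by rewrite ltnS => ltnk; rewrite fdiff_exprS !IHn ?mulr0 ?addr0 // ltnW.
Qed.

Lemma fdiff_rstirling2 r n k : (0 < r)%N ->
  (k`! * rstirling2 r (n + r) (k + r))%:R = fdiff n k r%:R.
Proof.
move=> r_gt0; elim: n k => [|n IHn] k.
  rewrite rstirling2_diag -{2}(add0n r) eqn_add2r.
  by case: k => [|k]; rewrite ?expr0 // muln0 fdiff_gt.
rewrite addSn; case: k => [|k].
  rewrite -{2 3}(prednK r_gt0) rstirling2S prednK ?leq_addl //.
  rewrite (@rstirling2_lt r (n + r) r.-1) ?leq_addl ?prednK // addn0.
  have := IHn 0%N; rewrite fact0 !mul1n add0n /= => IH0.
  by rewrite natrM IH0 exprS.
rewrite addSn rstirling2S ?leq_addl // factS.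
have := IHn k.+1; have := IHn k; rewrite addSn => IHk IHk1.
rewrite fdiff_exprS fdiffS fdiff_addr1 -IHk -IHk1 factS.
rewrite !natrM !natrD !natrM -!natr1 !natrD; ring.
Qed.

End ForwardDifferences.

Section DifferenceSums.
Variable R : comPzRingType.
Implicit Types (a b : nat -> R) (x : R).

(* A hypothesis [forall k, a k = shift_seq a k + b k] says that [b] is the
   backward difference of [a], with [a (-1) = 0]. *)
Definition shift_seq a k : R := if k is k'.+1 then a k' else 0.

Lemma big_ord_shift a (g : nat -> R) N :
  \sum_(j < N) a j * g j.+1 = \sum_(j < N.+1) shift_seq a j * g j.
Proof. by rewrite big_ord_recl /= mul0r add0r. Qed.

Definition diff_sum a n x := \sum_(k < n.+1) a k * fdiff n k x.

Lemma diff_sum_addr1 a b n x : (forall k, a k = shift_seq a k + b k) ->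
  diff_sum a n (x + 1) = 2 * diff_sum a n x - diff_sum b n x.
Proof.
move=> aE; rewrite /diff_sum mulr_sumr -sumrB.
under eq_bigr do rewrite fdiff_addr1 mulrDr.
rewrite big_split /= (big_ord_shift a (fdiff n ^~ x)).
rewrite big_ord_recr (fdiff_gt _ (ltnSn n)).
rewrite /= mulr0 addr0 -big_split /=.
by apply: eq_bigr => k _; rewrite (aE k); ring.
Qed.

Definition binr r k : R := 'C(k + r, r)%:R.

Lemma binrS r k : binr r.+1 k = shift_seq (binr r.+1) k + binr r k.
Proof.
case: k => [|k] /=; first by rewrite /binr !add0n !binn add0r.
by rewrite /binr addSn binS natrD addnS addSn.
Qed.

Lemma binr0 k : binr 0 k = shift_seq (binr 0) k + (k == 0)%:R.
Proof. by case: k => [|k]; rewrite /binr /= !bin0 ?add0r ?addr0. Qed.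

Lemma diff_sum_delta n x : diff_sum (fun k => (k == 0)%:R) n x = x ^+ n.
Proof.
rewrite /diff_sum big_ord_recl big1 ?addr0 /= ?mul1r // => k _.
by rewrite mul0r.
Qed.

Lemma rfubini_diff_sum n r : (0 < r)%N ->
  (rfubini n r)%:R = r`!%:R * diff_sum (binr r) n r%:R.
Proof.
move=> r_gt0; rewrite /rfubini big_mkord natr_sum mulr_sumr.
apply: eq_bigr => k _; rewrite -fdiff_rstirling2 // /binr.
rewrite -(bin_fact (leq_addl k r)) addnK.
by rewrite !natrM; ring.
Qed.

End DifferenceSums.

Arguments binr {R} r k.

Section TwoAdicApproximation.
Implicit Types (a b : nat -> int) (x y : int).

Definition pow2_term n y j := 2 ^+ j * (y - j%:R) ^+ n.

Definition pow2_sum a N n y := \sum_(j < N) a j * pow2_term n y j.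

Lemma pow2_sum_subr1 a b N n y : (forall k, a k = shift_seq a k + b k) ->
  (2 ^+ N %| pow2_sum a N n y - 2 * pow2_sum a N n (y - 1) - pow2_sum b N n y)%Z.
Proof.
move=> aE; have -> : 2 * pow2_sum a N n (y - 1) =
    \sum_(j < N.+1) shift_seq a j * pow2_term n y j.
  rewrite -big_ord_shift mulr_sumr; apply: eq_bigr => j _.
  rewrite /pow2_term; have -> : y - 1 - j%:R = y - j.+1%:R by rewrite -natr1; ring.
  by rewrite exprS; ring.
rewrite big_ord_recr /=.
set c := _ * pow2_term n y N; rewrite /pow2_sum.
set Sa := \sum_(j < N) _; set Ss := \sum_(j < N) _; set Sb := \sum_(j < N) _.
have -> : Sa - (Ss + c) - Sb = Sa - Ss - Sb - c by ring.
rewrite /Sa /Ss /Sb -!sumrB big1 => [|j _]; last by rewrite (aE j); ring.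
by rewrite sub0r rpredN dvdz_mull // dvdz_mulr.
Qed.

Lemma pow2_sum_delta N n y : pow2_sum (fun k => (k == 0)%:R) N.+1 n y = y ^+ n.
Proof.
rewrite /pow2_sum big_ord_recl big1 ?addr0 => [|j _]; last by rewrite mul0r.
by rewrite /= /pow2_term !mul1r mulr0n subr0.
Qed.

Lemma dvdz_doubling N (w : int -> int) :
  (forall x, (2 ^+ N %| w (x + 1) - 2 * w x)%Z) -> forall x, (2 ^+ N %| w x)%Z.
Proof.
move=> wS x; suff dvd_w t : (2 ^+ N %| w x - 2 ^+ t * w (x - t%:R))%Z.
  by rewrite -(subrK (2 ^+ N * w (x - N%:R)) (w x)) rpredD ?dvdz_mulr.
elim: t => [|t IHt]; first by rewrite subr0 mul1r subrr dvdz0.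
have -> : w x - 2 ^+ t.+1 * w (x - t.+1%:R) = w x - 2 ^+ t * w (x - t%:R)
    + 2 ^+ t * (w (x - t.+1%:R + 1) - 2 * w (x - t.+1%:R)).
  have -> : x - t.+1%:R + 1 = x - t%:R by rewrite -natr1; ring.
  by rewrite exprS; ring.
by rewrite rpredD ?dvdz_mull.
Qed.

Lemma diff_sum_pow2_sum_step a b N n (e : int) s :
    (forall k, a k = shift_seq a k + b k) ->
    (forall x, (2 ^+ N %| diff_sum b n x - e * pow2_sum b N n (x - s%:R))%Z) ->
  forall x, (2 ^+ N %| diff_sum a n x - (- e) * pow2_sum a N n (x - s.+1%:R))%Z.
Proof.
move=> aE bN; apply: dvdz_doubling => x.
have -> : x + 1 - s.+1%:R = x - s%:R by rewrite -natr1; ring.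
have -> : x - s.+1%:R = x - s%:R - 1 by rewrite -natr1; ring.
rewrite (diff_sum_addr1 n x aE).
have -> : 2 * diff_sum a n x - diff_sum b n x - - e * pow2_sum a N n (x - s%:R)
    - 2 * (diff_sum a n x - - e * pow2_sum a N n (x - s%:R - 1))
  = e * (pow2_sum a N n (x - s%:R) - 2 * pow2_sum a N n (x - s%:R - 1)
         - pow2_sum b N n (x - s%:R))
    - (diff_sum b n x - e * pow2_sum b N n (x - s%:R)) by ring.
by rewrite rpredB ?dvdz_mull ?pow2_sum_subr1.
Qed.

Lemma diff_sum_binr_pow2_sum N n r x :
  (2 ^+ N %| diff_sum (binr r) n x
             - (-1) ^+ r.+1 * pow2_sum (binr r) N n (x - r.+1%:R))%Z.
Proof.
case: N => [|N]; first by rewrite expr0 dvd1z.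
elim: r x => [|r IHr] x.
  rewrite expr1; apply: (diff_sum_pow2_sum_step (@binr0 int)) => {}x.
  by rewrite diff_sum_delta subr0 pow2_sum_delta mul1r subrr dvdz0.
by rewrite [(-1) ^+ _]exprS mulN1r; apply: (diff_sum_pow2_sum_step (@binrS int r)).
Qed.

Lemma rfubini_pow2_sum N n r : (0 < r)%N ->
  (2 ^+ N %| (rfubini n r)%:R
             - r`!%:R * (-1) ^+ r.+1 * pow2_sum (binr r) N n (-1))%Z.
Proof.
move=> r_gt0; rewrite rfubini_diff_sum // -mulrA -mulrBr dvdz_mull //.
by have := diff_sum_binr_pow2_sum N n r r%:R; rewrite -natr1 opprD addrA subrr sub0r.
Qed.

End TwoAdicApproximation.

Lemma dvdz_natr (d k : nat) : ((d%:R : int) %| (k%:R : int))%Z = (d %| k)%N.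
Proof. by rewrite !natz. Qed.

Lemma pow2_term_period r m n j : (2 <= r)%N -> (7 <= m)%N -> (m - 1 <= n)%N ->
    (j < m)%N ->
  (2 ^+ m %| r`!%:R * binr r j
             * (pow2_term (n + 2 ^ (m - 6)) (-1) j - pow2_term n (-1) j))%Z.
Proof.
move=> r_ge2 m_ge7 n_ge jm; set p := (2 ^ (m - 6))%N.
have p_even : ~~ odd p by rewrite oddX orbF subn_eq0 -ltnNge (leq_trans _ m_ge7).
set c : int := (r`! * 'C(j + r, r) * 2 ^ j)%N%:R.
have -> : r`!%:R * binr r j * (pow2_term (n + p) (-1) j - pow2_term n (-1) j)
    = c * (- j.+1%:R) ^+ n * (j.+1%:R ^+ p - 1).
  rewrite /pow2_term /binr /c (_ : -1 - j%:R = - j.+1%:R); last by rewrite -natr1; ring.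
  rewrite exprD [(- _) ^+ p]exprNn -signr_odd (negbTE p_even) mul1r !natrM natrX.
  ring.
have [odd_j|even_j] := boolP (odd j).
  have c_dvd : (2 ^+ j %| c)%Z by rewrite /c natrM natrX dvdz_mull.
  have a_dvd : (2 %| - j.+1%:R)%Z by rewrite rpredN dvdz_natr dvdn2 /= odd_j.
  have j_gt0 := odd_gt0 odd_j.
  apply/dvdz_mulr/(dvdz_trans (dvdz_exp2l 2 (_ : m <= j + n)%N)); first lia.
  by rewrite exprD dvdz_mul // dvdz_exp2r.
have sub1_dvd : (2 ^+ (m - 4) %| j.+1%:R ^+ p - 1)%Z.
  rewrite -natrX -[1]/(1%:R) -natrB ?expn_gt0 // -natrX dvdz_natr.
  by rewrite (_ : m - 4 = (m - 6).+2)%N ?odd_expn_pow2_sub1 /= ?even_j //; lia.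
have [j0|j_gt0] := posnP j; first by rewrite j0 expr1n subrr mulr0 dvdz0.
have j_ge2 : (2 <= j)%N.
  by rewrite ltn_neqAle j_gt0 andbT; apply: contraNneq even_j => <-.
have c_dvd : (2 ^+ 4 %| c)%Z by rewrite -natrX dvdz_natr dvdn_fact_bin_pow2.
have -> : m = (4 + (m - 4))%N by lia.
by rewrite mulrAC exprD dvdz_mulr // dvdz_mul.
Qed.

Lemma pow2_sum_period r m n : (2 <= r)%N -> (7 <= m)%N -> (m - 1 <= n)%N ->
  (2 ^+ m %| r`!%:R * (pow2_sum (binr r) m (n + 2 ^ (m - 6)) (-1)
                       - pow2_sum (binr r) m n (-1)))%Z.
Proof.
move=> r_ge2 m_ge7 n_ge; rewrite /pow2_sum -sumrB mulr_sumr rpred_sum // => j _.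
by rewrite -mulrBr mulrA pow2_term_period.
Qed.

Theorem theorem4p7 (r m n : nat) :
  (2 <= r)%N -> (7 <= m)%N -> (m - 1 <= n)%N ->
  rfubini (n + 2 ^ (m - 6)) r = rfubini n r %[mod 2 ^ m].
Proof.
move=> r_ge2 m_ge7 n_ge; have r_gt0 : (0 < r)%N by apply: leq_trans r_ge2.
apply/eqP; rewrite -eqz_nat -!modz_nat eqz_mod_dvd -!natz natrX.
have approx k := rfubini_pow2_sum m k r_gt0.
set P := pow2_sum (binr r) m; set e : int := (-1) ^+ r.+1.
have -> : (rfubini (n + 2 ^ (m - 6)) r)%:R - (rfubini n r)%:R
    = ((rfubini (n + 2 ^ (m - 6)) r)%:R - r`!%:R * e * P (n + 2 ^ (m - 6))%N (-1))
      - ((rfubini n r)%:R - r`!%:R * e * P n (-1))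
      + e * (r`!%:R * (P (n + 2 ^ (m - 6))%N (-1) - P n (-1))) by ring.
apply: rpredD; first exact: rpredB (approx _) (approx _).
exact/dvdz_mull/pow2_sum_period.
Qed.
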